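(* Consider any algorithm in $\mathcal{A}$ run over either the nearest-neighbor graph $\mathcal{G}^\mu_{x(k)}$ or the nearest-value graph $\mathcal{G}^{\mu v}_{x(k)}$ (for some positive integer $\mu$). For any two nodes $u,v\in\mathcal{V}$ and any time $k$: (i) if $x_u(k)=x_v(k)$ then $x_u(k+1)=x_v(k+1)$; (ii) if $x_u(k)<x_v(k)$ then $x_u(k+1)\le x_v(k+1)$.
   Context: Nodes $\mathcal{V}=\{1,\dots,n\}$, $n\ge3$, states $x_i(k)\in\mathbb{R}$, discrete time. The algorithm class $\mathcal{A}$: each node updates $$x_i(k+1)=\eta_k x_i(k)+\alpha_k\min_{j\in\mathcal{N}_i(k)}x_j(k)+(1-\eta_k-\alpha_k)\max_{j\in\mathcal{N}_i(k)}x_j(k),$$ with node-independent parameters $\eta_k\in[0,1]$, $\alpha_k\in[0,1-\eta_k]$; here $\mathcal{N}_i(k)=\{i\}\cup\mathcal{N}_i^-(k)\cup\mathcal{N}_i^+(k)$. Nearest-neighbor graph $\mathcal{G}^\mu_{x(k)}$: $\mathcal{N}_i^-(k)$ is a set of $\min(\mu,|\{j:x_j(k)<x_i(k)\}|)$ nodes $j$ with $x_j(k)<x_i(k)$ whose values are closest to $x_i(k)$ among such nodes (ties broken arbitrarily), and $\mathcal{N}_i^+(k)$ is defined symmetrically from $\{j: x_j(k)>x_i(k)\}$. Nearest-value graph $\mathcal{G}^{\mu v}_{x(k)}$: $\mathcal{N}_i^-(k)$ is a set of nodes $j$ with $x_j(k)<x_i(k)$ having pairwise distinct values, these values being exactly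 the $\mu$ largest distinct values smaller than $x_i(k)$ (all such distinct values if there are fewer than $\mu$); $\mathcal{N}_i^+(k)$ is defined symmetrically using the $\mu$ smallest distinct values larger than $x_i(k)$. *)

(* States take values in an arbitrary real field R
   (the paper's R is an instance). *)
From HB Require Import structures.
From mathcomp Require Import all_boot all_order all_algebra.
Set Implicit Arguments. Unset Strict Implicit. Unset Printing Implicit Defensive.
Import Order.TTheory GRing.Theory Num.Theory.
Local Open Scope ring_scope.

Section Graphs.
Variables (R : realFieldType) (n : nat).
Implicit Types (x : 'I_n -> R) (i j l : 'I_n).

Definition lower x i : {set 'I_n} := [set j | x j < x i].
Definition upper x i : {set 'I_n} := [set j | x i < x j].

(* Nearest-neighbor graph G^mu_x: Nm i is a set of min(mu, |lower|) nodes
   of smaller value, whose values are closest to x i among such nodes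
   (no excluded smaller node is strictly closer); symmetrically for Np. *)
Definition nn_graph (mu : nat) x (Nm Np : 'I_n -> {set 'I_n}) : Prop :=
  forall i,
    [/\ [/\ Nm i \subset lower x i,
        #|Nm i| = minn mu #|lower x i| &
        (forall j l, j \in Nm i -> l \in lower x i -> l \notin Nm i -> x l <= x j)] &
        [/\ Np i \subset upper x i,
        #|Np i| = minn mu #|upper x i| &
        (forall j l, j \in Np i -> l \in upper x i -> l \notin Np i -> x j <= x l)]].

Definition lower_vals x i : seq R := undup [seq x j | j <- enum (lower x i)].
Definition upper_vals x i : seq R := undup [seq x j | j <- enum (upper x i)].

(* Nearest-value graph G^{mu v}_x: Nm i consists of smaller-valued nodes with
   pairwise distinct values, exactly the min(mu, #distinct smaller values)
   largest distinct values below x i; symmetrically for Np. *)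
Definition nv_graph (mu : nat) x (Nm Np : 'I_n -> {set 'I_n}) : Prop :=
  forall i,
    [/\ [/\ Nm i \subset lower x i,
            {in Nm i &, injective x},
            #|Nm i| = minn mu (size (lower_vals x i)) &
            (forall j l, j \in Nm i -> l \in lower x i ->
               (forall j', j' \in Nm i -> x l != x j') -> x l < x j)] &
        [/\ Np i \subset upper x i,
            {in Np i &, injective x},
            #|Np i| = minn mu (size (upper_vals x i)) &
            (forall j l, j \in Np i -> l \in upper x i ->
               (forall j', j' \in Np i -> x l != x j') -> x j < x l)]].

Definition nbhd (Nm Np : 'I_n -> {set 'I_n}) i : {set 'I_n} :=
  i |: (Nm i :|: Np i).

(* min / max of x over N_i (N_i contains i, so x i is a harmless seed) *)
Definition nmin x (N : {set 'I_n}) i : R := \big[Order.min/x i]_(j in N) x j.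
Definition nmax x (N : {set 'I_n}) i : R := \big[Order.max/x i]_(j in N) x j.

Definition A_step (eta alpha : R) x (Nm Np : 'I_n -> {set 'I_n}) i : R :=
  eta * x i + alpha * nmin x (nbhd Nm Np i) i
  + (1 - eta - alpha) * nmax x (nbhd Nm Np i) i.

End Graphs.

From HB Require Import structures.
From mathcomp Require Import all_boot all_order all_algebra.
From mathcomp Require Import zify.
Import Order.TTheory GRing.Theory Num.Theory.
Local Open Scope ring_scope.
Set Implicit Arguments. Unset Strict Implicit.

(* An update of class A is a nonnegative combination of x_i, of the minimum
   and of the maximum of x over the closed neighbourhood N_i.  It therefore
   suffices to show that both neighbourhood extrema are monotone in x_i:
   x_u <= x_v implies min_{N_u} x <= min_{N_v} x and max_{N_u} x <= max_{N_v} x.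

   For the minimum, every j in N_v must be dominated from below by some node
   of N_u.  Only a lower neighbour j of v with x_j < x_u is problematic; the
   key combinatorial facts [nn_down_closed] and [nv_down_closed] show that
   then some lower neighbour of u has value <= x_j (a counting argument on
   neighbour sets, resp. on sets of distinct values, bounded by mu).  The
   maximum follows by duality: negating x exchanges the roles of lower and
   upper neighbours and turns both graph definitions into themselves. *)

Section NeighbourGraphs.
Variables (R : realFieldType) (n : nat).
Implicit Types (x : 'I_n -> R) (Nm Np : 'I_n -> {set 'I_n}).

Definition neighbour_graph mu x Nm Np : Prop :=
  nn_graph mu x Nm Np \/ nv_graph mu x Nm Np.

Definition down_closed x Nm : Prop :=
  forall u v j, x u <= x v -> j \in Nm v -> x j < x u ->
  exists2 j', j' \in Nm u & x j' <= x j.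

Definition vals x (S : {set 'I_n}) : seq R := [seq x l | l <- enum S].

Lemma size_vals x (S : {set 'I_n}) : size (vals x S) = #|S|.
Proof. by rewrite size_map cardE. Qed.

Lemma mem_vals x (S : {set 'I_n}) l : l \in S -> x l \in vals x S.
Proof. by move=> lS; apply: map_f; rewrite mem_enum. Qed.

Lemma lower_subset x u v : x u <= x v -> lower x u \subset lower x v.
Proof. by move=> le_uv; apply/subsetP => l; rewrite !inE => /lt_le_trans; apply. Qed.

(* Nearest-neighbour graphs: if no lower neighbour of u lay at or below x_j,
   all of them would be lower neighbours of v (they are closer to v than j),
   so u would have fewer than mu of them, hence every node below it,
   including j. *)
Lemma nn_down_closed mu x Nm Np : nn_graph mu x Nm Np -> down_closed x Nm.
Proof.
move=> g u v j le_uv jv lt_ju.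
have [[sub_u card_u _] _] := g u; have [[_ card_v near_v] _] := g v.
have sub_low : Nm u \subset lower x v.
  by apply: subset_trans sub_u _; apply: lower_subset.
case: (boolP [exists j' in Nm u, x j' <= x j]) => [/exists_inP //|/exists_inP none].
have far l : l \in Nm u -> x j < x l.
  by move=> lu; rewrite ltNge; apply/negP => le_lj; apply: none; exists l.
have j_notin_u : j \notin Nm u by apply/negP => /far; rewrite ltxx.
have sub_uv : Nm u \subset Nm v.
  apply/subsetP => l lu; apply/negPn/negP => l_notin_v.
  have l_low_v := subsetP sub_low l lu.
  by have := near_v j l jv l_low_v l_notin_v; rewrite leNgt far.
have lt_card : (#|Nm u| < #|Nm v|)%N.
  by apply: proper_card; apply/properP; split => //; exists j.
have full_u : Nm u = lower x u.
  apply/eqP; rewrite eqEcard sub_u /=.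
  (* the cardinals are generalized so that lia treats them as atoms *)
  move: lt_card; rewrite card_u card_v; move: #|lower x u| #|lower x v| => L L'.
  lia.
by move: j_notin_u; rewrite full_u inE lt_ju.
Qed.

(* Same fact for nearest-value graphs, counting distinct values instead:
   otherwise x_j together with the values of Nm u would give mu + 1 distinct
   values all carried by Nm v. *)
Lemma nv_down_closed mu x Nm Np : nv_graph mu x Nm Np -> down_closed x Nm.
Proof.
move=> g u v j le_uv jv lt_ju.
have [[sub_u inj_u card_u _] _] := g u; have [[_ _ card_v near_v] _] := g v.
have sub_low : Nm u \subset lower x v.
  by apply: subset_trans sub_u _; apply: lower_subset.
case: (boolP [exists j' in Nm u, x j' <= x j]) => [/exists_inP //|/exists_inP none].
have far l : l \in Nm u -> x j < x l.
  by move=> lu; rewrite ltNge; apply/negP => le_lj; apply: none; exists l.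
(* s lists x_j and the values of Nm u: mu + 1 distinct values below x_u,
   all of them also values of Nm v, which carries at most mu values *)
set s := x j :: vals x (Nm u).
have uniq_s : uniq s.
  rewrite /= map_inj_in_uniq ?enum_uniq ?andbT; last first.
    by move=> a b; rewrite !mem_enum; apply: inj_u.
  by apply/mapP => -[l]; rewrite mem_enum => /far + e; rewrite e ltxx.
have s_low_u : {subset s <= lower_vals x u}.
  move=> z; rewrite inE mem_undup => /predU1P [->|/mapP [l]].
    by apply: mem_vals; rewrite inE.
  by rewrite mem_enum => lu ->; apply: mem_vals; apply: (subsetP sub_u).
have s_v : {subset s <= vals x (Nm v)}.
  move=> z; rewrite inE => /predU1P [->|/mapP [l]]; first exact: mem_vals.
  rewrite mem_enum => lu ->.
  case: (boolP [exists j' in Nm v, x l == x j']).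
    by case/exists_inP => j' j'v /eqP ->; apply: mem_vals.
  move/exists_inP => new.
  have l_low_v := subsetP sub_low l lu.
  have : x l < x j.
    by apply: near_v => // j' j'v; apply/negP => e; apply: new; exists j'.
  by rewrite ltNge (ltW (far l lu)).
have := uniq_leq_size uniq_s s_low_u; have := uniq_leq_size uniq_s s_v.
by rewrite /= !size_vals card_u card_v; lia.
Qed.

Lemma neighbour_graph_down_closed mu x Nm Np :
  neighbour_graph mu x Nm Np -> down_closed x Nm.
Proof. by case; [apply: nn_down_closed | apply: nv_down_closed]. Qed.

Lemma neighbour_graph_upper mu x Nm Np w :
  neighbour_graph mu x Nm Np -> Np w \subset upper x w.
Proof. by case=> g; have [_ []] := g w. Qed.

Lemma lower_opp x i : lower (fun j => - x j) i = upper x i.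
Proof. by apply/setP => j; rewrite !inE ltrN2. Qed.

Lemma upper_opp x i : upper (fun j => - x j) i = lower x i.
Proof. by apply/setP => j; rewrite !inE ltrN2. Qed.

Lemma size_lower_vals_opp x i :
  size (lower_vals (fun j => - x j) i) = size (upper_vals x i).
Proof.
rewrite /lower_vals lower_opp (map_comp -%R x) undup_map_inj ?size_map //.
exact: oppr_inj.
Qed.

Lemma size_upper_vals_opp x i :
  size (upper_vals (fun j => - x j) i) = size (lower_vals x i).
Proof.
rewrite /upper_vals upper_opp (map_comp -%R x) undup_map_inj ?size_map //.
exact: oppr_inj.
Qed.

(* Negating the states maps each kind of graph to itself with lower and upper
   neighbours exchanged; this reduces the maximum to the minimum. *)
Lemma nn_graph_opp mu x Nm Np :
  nn_graph mu x Nm Np -> nn_graph mu (fun j => - x j) Np Nm.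
Proof.
move=> g i; have [[sm cm nm] [sp cp np]] := g i.
rewrite lower_opp upper_opp; split; split => // j l *; rewrite lerN2; auto.
Qed.

Lemma nv_graph_opp mu x Nm Np :
  nv_graph mu x Nm Np -> nv_graph mu (fun j => - x j) Np Nm.
Proof.
move=> g i; have [[sm im cm nm] [sp ip cp np]] := g i.
rewrite lower_opp upper_opp size_lower_vals_opp size_upper_vals_opp.
split; split => //.
- by move=> a b ha hb /oppr_inj; apply: ip.
- move=> j l jp lu hl; rewrite ltrN2; apply: np => // j' j'p.
  by rewrite -eqr_opp; apply: hl.
- by move=> a b ha hb /oppr_inj; apply: im.
- move=> j l jm lu hl; rewrite ltrN2; apply: nm => // j' j'm.
  by rewrite -eqr_opp; apply: hl.
Qed.

Lemma neighbour_graph_opp mu x Nm Np :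
  neighbour_graph mu x Nm Np -> neighbour_graph mu (fun j => - x j) Np Nm.
Proof. by case=> g; [left; apply: nn_graph_opp | right; apply: nv_graph_opp]. Qed.

Lemma nbhd_self Nm Np i : i \in nbhd Nm Np i.
Proof. exact: setU11. Qed.

Lemma nbhdC Nm Np i : nbhd Np Nm i = nbhd Nm Np i.
Proof. by rewrite /nbhd [Np i :|: _]setUC. Qed.

Lemma nmax_opp x (N : {set 'I_n}) i :
  nmax x N i = - nmin (fun j => - x j) N i.
Proof.
rewrite /nmin (big_morph _ (@oppr_min R) (erefl _)) opprK.
by under eq_bigr do rewrite opprK.
Qed.

(* Monotonicity of the neighbourhood minimum: each j in N_v is bounded below
   by u itself unless x_j < x_u, which forces j to be a lower neighbour of v,
   and then [down_closed] provides a lower neighbour of u below x_j. *)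
Lemma nmin_nbhd_mono x Nm Np u v :
  down_closed x Nm -> (forall w, Np w \subset upper x w) -> x u <= x v ->
  nmin x (nbhd Nm Np u) u <= nmin x (nbhd Nm Np v) v.
Proof.
move=> closed sub_up le_uv; apply: le_bigmin => [|j jv].
  by apply: le_trans le_uv; apply: bigmin_le_cond; apply: nbhd_self.
suff [j' j'u le_j] : exists2 j', j' \in nbhd Nm Np u & x j' <= x j.
  by apply: le_trans le_j; apply: bigmin_le_cond.
case: (leP (x u) (x j)) => [le_uj|lt_ju]; first by exists u; rewrite ?nbhd_self.
move: jv; rewrite !inE => /or3P [/eqP eq_jv|jm|jp].
- by move: lt_ju; rewrite eq_jv ltNge le_uv.
- have [j' j'u le_j] := closed u v j le_uv jm lt_ju.
  by exists j'; rewrite // !inE j'u orbT.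
- move/(subsetP (sub_up v)): jp; rewrite inE => lt_vj.
  by move: lt_ju; rewrite ltNge (ltW (le_lt_trans le_uv lt_vj)).
Qed.

Lemma nbhd_extrema_mono mu x Nm Np u v :
  neighbour_graph mu x Nm Np -> x u <= x v ->
  nmin x (nbhd Nm Np u) u <= nmin x (nbhd Nm Np v) v /\
  nmax x (nbhd Nm Np u) u <= nmax x (nbhd Nm Np v) v.
Proof.
move=> g le_uv; split.
  apply: nmin_nbhd_mono le_uv; first exact: neighbour_graph_down_closed g.
  by move=> w; apply: neighbour_graph_upper g.
have g' := neighbour_graph_opp g.
rewrite !nmax_opp lerN2 -!(nbhdC Nm).
apply: nmin_nbhd_mono; rewrite ?lerN2 //; first exact: neighbour_graph_down_closed g'.
by move=> w; apply: neighbour_graph_upper g'.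
Qed.

Lemma A_step_mono mu (eta alpha : R) x Nm Np u v :
  0 <= eta -> 0 <= alpha -> alpha <= 1 - eta ->
  neighbour_graph mu x Nm Np -> x u <= x v ->
  A_step eta alpha x Nm Np u <= A_step eta alpha x Nm Np v.
Proof.
move=> eta0 alpha0 alpha1 g le_uv.
have [le_min le_max] := nbhd_extrema_mono g le_uv.
have max_weight : 0 <= 1 - eta - alpha by rewrite subr_ge0.
by apply: lerD; [apply: lerD|]; apply: ler_wpM2l.
Qed.

End NeighbourGraphs.

Theorem lemma2 (R : realFieldType) (n : nat) (hn : (3 <= n)%N) (mu : nat)
  (hmu : (0 < mu)%N)
  (x : nat -> 'I_n -> R) (eta alpha : nat -> R)
  (Nm Np : nat -> 'I_n -> {set 'I_n})
  (heta : forall k, 0 <= eta k <= 1)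
  (halpha : forall k, 0 <= alpha k <= 1 - eta k)
  (hgraph : (forall k, nn_graph mu (x k) (Nm k) (Np k)) \/
            (forall k, nv_graph mu (x k) (Nm k) (Np k)))
  (hupd : forall k i, x k.+1 i = A_step (eta k) (alpha k) (x k) (Nm k) (Np k) i) :
  forall (u v : 'I_n) (k : nat),
    (x k u = x k v -> x k.+1 u = x k.+1 v) /\
    (x k u < x k v -> x k.+1 u <= x k.+1 v).
Proof.
move=> u v k.
have g : neighbour_graph mu (x k) (Nm k) (Np k) by case: hgraph => h; [left|right].
have step a b : x k a <= x k b -> x k.+1 a <= x k.+1 b.
  have /andP [eta0 _] := heta k; have /andP [alpha0 alpha1] := halpha k.
  by rewrite !hupd; apply: A_step_mono g.
split; first by move=> e; apply/le_anti; rewrite !step // e.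
by move/ltW; apply: step.
Qed.
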